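(* Let $\mathfrak k$ be a commutative field, $\mathfrak R=\mathfrak k[x_1,\dots,x_m]_0$ and $\bar{\mathfrak R}=\mathfrak k[x_1,\dots,x_m]\subset\mathfrak R$. Let $I$ be an ideal of $\mathfrak R$ and $\bar I=I\cap\bar{\mathfrak R}$. The injection $\lambda:\bar{\mathfrak R}\hookrightarrow\mathfrak R$ induces an injection of chain-complexes $\lambda:\mathrm{Ksz}_{\bar{\mathfrak R}}(\bar{\mathfrak R}/\bar I)\hookrightarrow\mathrm{Ksz}_{\mathfrak R}(\mathfrak R/I)$, which in turn induces an isomorphism $H_*(\mathrm{Ksz}_{\bar{\mathfrak R}}(\bar{\mathfrak R}/\bar I))\cong H_*(\mathrm{Ksz}_{\mathfrak R}(\mathfrak R/I))$.
   Context: $\mathfrak R$ is the polynomial ring localized at $0\in\mathfrak k^m$ (quotients $P/Q$ with $Q(0)\ne0$). For a ring $S\in\{\bar{\mathfrak R},\mathfrak R\}$ and an $S$-module $M$, the Koszul complex $\mathrm{Ksz}_S(M)$ has $\mathrm{Ksz}_n(M)=M\otimes_{\mathfrak k}\wedge^nV$, $V$ the $\mathfrak k$-vector space with basis $dx_1,\dots,dx_m$, and differential $d(\alpha\,dx_{i_1}\cdots dx_{i_n})=\sum_j(-1)^{j-1}\alpha x_{i_j}\,dx_{i_1}\cdots\widehat{dx_{i_j}}\cdots dx_{i_n}$. *)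

From HB Require Import structures.
From mathcomp Require Import all_boot all_order all_algebra.
From mathcomp Require Import fraction.
From mathcomp Require Import mpoly.
Set Implicit Arguments. Unset Strict Implicit. Unset Printing Implicit Defensive.
Import Order.TTheory GRing.Theory Num.Theory.
Local Open Scope ring_scope.

Section Koszul.
Variables (k : fieldType) (m : nat).

Definition Pol := {mpoly k[m]}.
Definition Frac := {fraction Pol}.
Definition inFrac (p : Pol) : Frac := FracField.tofrac p.

Definition inPol (x : Frac) : Prop := exists p : Pol, x = inFrac p.

(* Elements of R = k[x_1..x_m]_0 : quotients P/Q with Q(0) <> 0. *)
Definition inLoc (x : Frac) : Prop :=
  exists p q : Pol, q.@[fun _ => 0] != 0 /\ x = inFrac p / inFrac q.

Definition is_ideal (S I : Frac -> Prop) : Prop :=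
  (forall x, I x -> S x) /\ I 0 /\
  (forall x y, I x -> I y -> I (x + y)) /\
  (forall r x, S r -> I x -> I (r * x)).

Definition xvar (i : 'I_m) : Frac := inFrac 'X_i.

(* Chains of the Koszul complex: an element of M (x)_k /\^n V, with
   M = S/J, is given by its coefficients on the basis dx_T
   (T = {i_1 < ... < i_n}, #|T| = n), the coefficients being
   representatives in S of classes of S/J. *)
Definition chain := {set 'I_m} -> Frac.

Definition is_chain (S : Frac -> Prop) (n : nat) (c : chain) : Prop :=
  (forall T, S (c T)) /\ (forall T : {set 'I_m}, #|T| != n -> c T = 0).

(* Koszul differential:
   d(a dx_{i_1}...dx_{i_n}) = sum_j (-1)^(j-1) a x_{i_j} dx_{i_1}..^..dx_{i_n},
   i.e. the coefficient of dx_T in d c is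
   sum_{i notin T} (-1)^#{t in T | t < i} x_i c(T u {i}). *)
Definition kdiff (c : chain) : chain := fun T =>
  \sum_(i : 'I_m | i \notin T)
     (-1) ^+ #|[set t in T | (t < i)%N]| * xvar i * c (i |: T).

Definition eq_mod (J : Frac -> Prop) (c c' : chain) : Prop :=
  forall T : {set 'I_m}, J (c T - c' T).

Definition is_cycle (S J : Frac -> Prop) (n : nat) (c : chain) : Prop :=
  is_chain S n c /\ eq_mod J (kdiff c) (fun _ => 0).

Definition homologous (S J : Frac -> Prop) (n : nat) (c c' : chain) : Prop :=
  exists w, is_chain S n.+1 w /\ eq_mod J (fun T => c T - c' T) (kdiff w).

(* The map induced on homology H_n by the chain map
   lambda : Ksz_S(S/J) -> Ksz_S'(S'/J')  (identity on representatives)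
   is a bijection. *)
Definition induces_homology_iso (S J S' J' : Frac -> Prop) (n : nat) : Prop :=
  (forall z z', is_cycle S J n z -> is_cycle S J n z' ->
     (homologous S J n z z' <-> homologous S' J' n z z')) /\
  (forall z', is_cycle S' J' n z' ->
     exists z, is_cycle S J n z /\ homologous S' J' n z z').

End Koszul.

From mathcomp Require Import all_boot all_algebra.
From mathcomp Require Import fraction mpoly.
From mathcomp Require Import ring.
Set Implicit Arguments. Unset Strict Implicit. Unset Printing Implicit Defensive.
Import GRing.Theory.
Local Open Scope ring_scope.

(* Multiplication by x_i is null-homotopic on every Koszul complex
   Ksz_S(S/J), the homotopy being c |-> c dx_i; hence a polynomial p acts on
   Koszul homology as its constant term p(0).  Finitely many elements of R
   have a common denominator Q, which may be normalised to Q(0) = 1.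
   Multiplying by Q sends chains of Ksz_R(R/I) into Ksz_Rbar(Rbar/Ibar)
   while acting as the identity on homology; this gives both injectivity and
   surjectivity of H_*(lambda). *)

Section KoszulHomotopy.
Variables (k : fieldType) (m : nat).
Local Notation F := (Frac k m).
Local Notation chain := (chain k m).

Lemma inFrac0 : inFrac (0 : Pol k m) = 0. Proof. exact: rmorph0. Qed.
Lemma inFrac1 : inFrac (1 : Pol k m) = 1. Proof. exact: rmorph1. Qed.
Lemma inFracD (p q : Pol k m) : inFrac (p + q) = inFrac p + inFrac q.
Proof. exact: rmorphD. Qed.
Lemma inFracM (p q : Pol k m) : inFrac (p * q) = inFrac p * inFrac q.
Proof. exact: rmorphM. Qed.

Definition ksign (T : {set 'I_m}) (i : 'I_m) : F :=
  (-1) ^+ #|[set t in T | (t < i)%N]|.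

Lemma kdiffE (c : chain) T :
  kdiff c T = \sum_(i : 'I_m | i \notin T) ksign T i * xvar k i * c (i |: T).
Proof. by []. Qed.

Lemma ksignU1 (T : {set 'I_m}) i j : j \notin T ->
  ksign (j |: T) i = (if (j < i)%N then -1 else 1) * ksign T i.
Proof.
move=> jT; rewrite /ksign; case: ifP => ji.
  have -> : [set t in j |: T | (t < i)%N] = j |: [set t in T | (t < i)%N].
    by apply/setP => x; rewrite !inE; case: eqVneq => [->|].
  by rewrite cardsU1 inE (negbTE jT) exprS.
have -> : [set t in j |: T | (t < i)%N] = [set t in T | (t < i)%N].
  by apply/setP => x; rewrite !inE; case: eqVneq => [->|]; rewrite ?ji ?andbF.
by rewrite mul1r.
Qed.

Lemma ksign_sqr T i : ksign T i * ksign T i = 1.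
Proof. by rewrite -exprMn mulrNN mulr1 expr1n. Qed.

Definition wedge_dx (i : 'I_m) (c : chain) : chain := fun U =>
  if i \in U then ksign U i * c (U :\ i) else 0.

Lemma kdiff_wedge_dx i (c : chain) T :
  kdiff (wedge_dx i c) T + wedge_dx i (kdiff c) T = xvar k i * c T.
Proof.
rewrite /wedge_dx kdiffE; case: (boolP (i \in T)) => iT; last first.
  rewrite addr0 (bigD1 i) //= !inE eqxx setU1K // ksignU1 // ltnn mul1r.
  rewrite big1 ?addr0 => [|j /andP [jT ji]]; last first.
    by rewrite in_setU1 (negbTE iT) eq_sym (negbTE ji) mulr0.
  by rewrite /= -[RHS]mul1r -(ksign_sqr T i); ring.
have sign_i : ksign (T :\ i) i = ksign T i.
  by rewrite -{2}(setD1K iT) ksignU1 ?setD11 // ltnn mul1r.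
rewrite [kdiff c _]kdiffE [X in _ + _ * X](bigD1 i) ?setD11 //= setD1K //.
rewrite sign_i [X in _ * (_ + X)](eq_bigl (fun j => j \notin T)) => [|j]; last first.
  by rewrite !inE; case: eqVneq => [->|]; rewrite ?iT ?andbT.
rewrite mulrDr addrCA mulr_sumr -big_split /= big1 => [|j jT].
  by rewrite addr0 !mulrA ksign_sqr mul1r.
(* The two terms through dx_j dx_i carry opposite signs. *)
have ji : j != i by apply: contraNneq jT => ->.
have jTi : j \notin T :\ i by rewrite inE negb_and jT orbT.
have -> : (j |: T) :\ i = j |: (T :\ i).
  apply/setP => x; rewrite !inE; case: (eqVneq x i) => [->|] //=.
  by rewrite eq_sym (negbTE ji).
rewrite in_setU1 iT orbT ksignU1 // -{1}(setD1K iT) ksignU1 ?setD11 //.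
case: (ltngtP i j) => [_|_|eij]; [ring | ring |].
by move: ji; rewrite -val_eqE /= eij eqxx.
Qed.

Definition scale_chain (r : F) (c : chain) : chain := fun T => r * c T.

Lemma kdiffZ r c T : kdiff (scale_chain r c) T = r * kdiff c T.
Proof.
by rewrite !kdiffE mulr_sumr; apply: eq_bigr => j _; rewrite /scale_chain; ring.
Qed.

Lemma kdiffD (c c' : chain) T :
  kdiff (fun U => c U + c' U) T = kdiff c T + kdiff c' T.
Proof. by rewrite !kdiffE -big_split; apply: eq_bigr => j _ /=; ring. Qed.

Lemma kdiffB (c c' : chain) T :
  kdiff (fun U => c U - c' U) T = kdiff c T - kdiff c' T.
Proof. by rewrite !kdiffE -sumrB; apply: eq_bigr => j _; ring. Qed.

Definition const_part (p : Pol k m) : Pol k m := (p.@[fun _ => 0])%:MP.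

Definition poly_subring (S : F -> Prop) : Prop :=
  [/\ forall x y, S x -> S y -> S (x + y), forall x y, S x -> S y -> S (x * y)
    & forall p, S (inFrac p)].

Section KoszulOverSubring.
Variables (S J : F -> Prop).
Hypotheses (S_subring : poly_subring S) (J_ideal : is_ideal S J).

Lemma S_add x y : S x -> S y -> S (x + y).
Proof. by case: S_subring => SD _ _; apply: SD. Qed.

Lemma S_mul x y : S x -> S y -> S (x * y).
Proof. by case: S_subring => _ SM _; apply: SM. Qed.

Lemma S_inFrac p : S (inFrac p). Proof. by case: S_subring. Qed.

Lemma S0 : S 0. Proof. by rewrite -inFrac0; apply: S_inFrac. Qed.

Lemma S_sign n : S ((-1) ^+ n).
Proof. by rewrite -(rmorph1 (@inFrac k m)) -rmorphN -rmorphXn; apply: S_inFrac. Qed.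

Lemma S_sub x y : S x -> S y -> S (x - y).
Proof. by move=> Sx Sy; rewrite -mulN1r; apply/S_add/S_mul/Sy/(S_sign 1). Qed.

Lemma J0 : J 0. Proof. by case: J_ideal => _ []. Qed.

Lemma J_add x y : J x -> J y -> J (x + y).
Proof. by case: J_ideal => _ [_ [JD _]]; apply: JD. Qed.

Lemma J_mul r x : S r -> J x -> J (r * x).
Proof. by case: J_ideal => _ [_ [_ JM]]; apply: JM. Qed.

Lemma J_sub x y : J x -> J y -> J (x - y).
Proof. by move=> Jx Jy; rewrite -mulN1r; apply/J_add/J_mul/Jy/(S_sign 1). Qed.

Lemma S_kdiff n c : is_chain S n c -> forall T, S (kdiff c T).
Proof.
case=> Sc _ T; rewrite kdiffE; apply: (big_ind S) => [||j _]; first exact: S0.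
  exact: S_add.
by apply/S_mul/Sc/S_mul/S_inFrac/S_sign.
Qed.

Lemma is_chainZ r n c : S r -> is_chain S n c -> is_chain S n (scale_chain r c).
Proof.
move=> Sr [Sc c0]; split=> T; first exact: S_mul.
by move/c0; rewrite /scale_chain => ->; rewrite mulr0.
Qed.

Lemma is_chainD n c c' : is_chain S n c -> is_chain S n c' ->
  is_chain S n (fun T => c T + c' T).
Proof.
by move=> [Sc c0] [Sc' c'0]; split=> T; [exact: S_add | move=> h; rewrite c0 ?c'0 ?addr0].
Qed.

Lemma is_chainB n c c' : is_chain S n c -> is_chain S n c' ->
  is_chain S n (fun T => c T - c' T).
Proof.
by move=> [Sc c0] [Sc' c'0]; split=> T; [exact: S_sub | move=> h; rewrite c0 ?c'0 ?subr0].
Qed.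

Lemma is_chain_wedge_dx i n c : is_chain S n c -> is_chain S n.+1 (wedge_dx i c).
Proof.
case=> Sc c0; split=> U; rewrite /wedge_dx; case: ifP => iU //; try exact: S0.
  exact/S_mul/Sc/S_sign.
move=> nU; rewrite c0 ?mulr0 //; apply: contra nU => /eqP <-.
by rewrite (cardsD1 i U) iU.
Qed.

Lemma is_cycleZ r n z : S r -> is_cycle S J n z -> is_cycle S J n (scale_chain r z).
Proof.
move=> Sr [zc dz]; split; first exact: is_chainZ.
by move=> T; rewrite kdiffZ subr0; apply: J_mul; rewrite // -[kdiff z T]subr0.
Qed.

Lemma is_cycleB n z z' : is_cycle S J n z -> is_cycle S J n z' ->
  is_cycle S J n (fun T => z T - z' T).
Proof.
move=> [zc dz] [zc' dz']; split; first exact: is_chainB.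
by move=> T; rewrite kdiffB subr0 -[kdiff z T]subr0 -[kdiff z' T]subr0; apply: J_sub.
Qed.

Definition is_boundary n (c : chain) :=
  exists w, is_chain S n.+1 w /\ eq_mod J c (kdiff w).

Lemma is_boundary_ext n (c c' : chain) :
  (forall T, c T = c' T) -> is_boundary n c -> is_boundary n c'.
Proof. by move=> e [w [wc cw]]; exists w; split=> // T; rewrite -e. Qed.

Lemma is_boundary0 n : is_boundary n (fun _ => 0).
Proof.
exists (fun _ => 0); split; first by split=> // T; apply: S0.
by move=> T; rewrite kdiffE big1 ?subr0 => [|j _]; [exact: J0 | rewrite mulr0].
Qed.

Lemma is_boundaryD n c c' : is_boundary n c -> is_boundary n c' ->
  is_boundary n (fun T => c T + c' T).
Proof.
move=> [w [wc cw]] [w' [wc' cw']]; exists (fun T => w T + w' T).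
split=> [|T]; first exact: is_chainD.
rewrite kdiffD (_ : _ - _ = (c T - kdiff w T) + (c' T - kdiff w' T)); last by ring.
exact: J_add.
Qed.

Lemma is_boundaryZ n r c : S r -> is_boundary n c -> is_boundary n (scale_chain r c).
Proof.
move=> Sr [w [wc cw]]; exists (scale_chain r w); split; first exact: is_chainZ.
by move=> T; rewrite kdiffZ /scale_chain -mulrBr; apply: J_mul.
Qed.

Lemma is_boundaryB n c c' : is_boundary n c -> is_boundary n c' ->
  is_boundary n (fun T => c T - c' T).
Proof.
move=> bc bc'; apply: (@is_boundary_ext _ (fun T => c T + scale_chain (-1) c' T)).
  by move=> T; rewrite /scale_chain mulN1r.
exact/is_boundaryD/is_boundaryZ/bc'/(S_sign 1).
Qed.

Lemma is_boundary_xvar n z i : is_cycle S J n z -> is_boundary n (scale_chain (xvar k i) z).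
Proof.
move=> [zc dz]; exists (wedge_dx i z); split; first exact: is_chain_wedge_dx.
move=> T; rewrite /scale_chain -(kdiff_wedge_dx i z T) addrAC subrr add0r /wedge_dx.
case: ifP => _; last exact: J0.
by apply: J_mul; [exact: S_sign | rewrite -[kdiff _ _]subr0].
Qed.

Lemma is_boundary_sub_const_part p n z : is_cycle S J n z ->
  is_boundary n (fun T => inFrac p * z T - inFrac (const_part p) * z T).
Proof.
pose B p := forall n z, is_cycle S J n z ->
  is_boundary n (fun T => inFrac p * z T - inFrac (const_part p) * z T).
have B_C c : B c%:MP.
  move=> n' z' _; apply: (is_boundary_ext _ (is_boundary0 n')) => T.
  by rewrite /const_part mevalC subrr.
have B_X i : B 'X_i.
  move=> n' z' zc; apply: (is_boundary_ext _ (is_boundary_xvar i zc)) => T.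
  by rewrite /const_part mevalXU inFrac0 mul0r subr0.
have B_D p1 p2 : B p1 -> B p2 -> B (p1 + p2).
  move=> b1 b2 n' z' zc.
  apply: (is_boundary_ext _ (is_boundaryD (b1 _ _ zc) (b2 _ _ zc))) => T.
  by rewrite /const_part mevalD mpolyCD !inFracD; ring.
(* p1 p2 z - c1 c2 z = (p1 - c1) (p2 z) + c1 (p2 - c2) z, and p2 z is a cycle. *)
have B_M p1 p2 : B p1 -> B p2 -> B (p1 * p2).
  move=> b1 b2 n' z' zc.
  have b12 := is_boundaryD (b1 _ _ (is_cycleZ (S_inFrac p2) zc))
    (is_boundaryZ (S_inFrac (const_part p1)) (b2 _ _ zc)).
  apply: (is_boundary_ext _ b12) => T.
  by rewrite /scale_chain /const_part mevalM mpolyCM !inFracM; ring.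
move: n z; change (B p).
elim/mpolyind: p => [|c mm p _ _ Bp]; first by rewrite -mpolyC0.
apply: (B_D) => //; rewrite -mul_mpolyC; apply: (B_M); first exact: B_C.
rewrite mpolyXE_id; apply: (big_ind B) => [|p1 p2|i _]; first by rewrite -mpolyC1.
  exact: B_M.
elim: (mm i) => [|e IH]; first by rewrite expr0 -mpolyC1.
by rewrite exprS; apply: (B_M).
Qed.

Lemma homologous_scale_poly p n z : p.@[fun _ => 0] = 1 ->
  is_cycle S J n z -> homologous S J n (scale_chain (inFrac p) z) z.
Proof.
move=> p0 zc; have := is_boundary_sub_const_part p zc.
by apply: is_boundary_ext => T; rewrite /const_part p0 inFrac1 mul1r.
Qed.

End KoszulOverSubring.
End KoszulHomotopy.

Section LocalisationAtOrigin.
Variables (k : fieldType) (m : nat).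
Local Notation F := (Frac k m).
Local Notation inPol := (@inPol k m).
Local Notation inLoc := (@inLoc k m).

Lemma inPol_add x y : inPol x -> inPol y -> inPol (x + y).
Proof. by case=> p ->; case=> q ->; exists (p + q); rewrite inFracD. Qed.

Lemma inPol_mul x y : inPol x -> inPol y -> inPol (x * y).
Proof. by case=> p ->; case=> q ->; exists (p * q); rewrite inFracM. Qed.

Lemma inPol_inFrac p : inPol (inFrac p). Proof. by exists p. Qed.

Lemma inFrac_neq0_at0 (q : Pol k m) : q.@[fun _ => 0] != 0 -> inFrac q != 0.
Proof. by apply: contraNneq => /eqP; rewrite tofrac_eq0 => /eqP ->; rewrite meval0. Qed.

Lemma inLoc_inFrac p : inLoc (inFrac p).
Proof. by exists p, 1; rewrite meval1 oner_neq0 inFrac1 divr1. Qed.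

Lemma inLoc_inPol x : inPol x -> inLoc x. Proof. by case=> p ->; apply: inLoc_inFrac. Qed.

Lemma inLoc_add x y : inLoc x -> inLoc y -> inLoc (x + y).
Proof.
case=> p1 [q1 [q1_0 ->]]; case=> p2 [q2 [q2_0 ->]].
exists (p1 * q2 + p2 * q1), (q1 * q2); split; first by rewrite mevalM mulf_neq0.
rewrite inFracD !inFracM addf_div //; exact: inFrac_neq0_at0.
Qed.

Lemma inLoc_mul x y : inLoc x -> inLoc y -> inLoc (x * y).
Proof.
case=> p1 [q1 [q1_0 ->]]; case=> p2 [q2 [q2_0 ->]].
exists (p1 * p2), (q1 * q2); split; first by rewrite mevalM mulf_neq0.
by rewrite !inFracM mulf_div.
Qed.

Lemma inLoc_common_denominator (w : chain k m) : (forall T, inLoc (w T)) ->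
  exists Q : Pol k m, Q.@[fun _ => 0] = 1 /\ forall T, inPol (inFrac Q * w T).
Proof.
move=> Lw.
suff [Q [Q0 QPw]] : exists Q : Pol k m, Q.@[fun _ => 0] != 0 /\
    forall T, T \in enum [set: {set 'I_m}] -> inPol (inFrac Q * w T).
  exists ((Q.@[fun _ => 0])^-1 *: Q); split; first by rewrite mevalZ mulVf.
  move=> T; rewrite -mul_mpolyC inFracM -mulrA.
  by apply/inPol_mul/QPw; rewrite ?mem_enum ?inE //; exact: inPol_inFrac.
elim: (enum _) => [|T0 s [Q [Q0 QPw]]]; first by exists 1; rewrite meval1 oner_neq0.
have [p [q [q0 wT0]]] := Lw T0.
exists (q * Q); split=> [|T]; first by rewrite mevalM mulf_neq0.
rewrite in_cons inFracM => /orP [/eqP ->|Ts].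
  exists (Q * p); rewrite wT0 inFracM mulrAC [inFrac q * _]mulrC divfK 1?mulrC //.
  exact: inFrac_neq0_at0.
by have [R eR] := QPw T Ts; exists (q * R); rewrite -mulrA eR inFracM.
Qed.

Lemma inPol_subring : poly_subring inPol.
Proof. by split; [exact: inPol_add | exact: inPol_mul | exact: inPol_inFrac]. Qed.

Lemma inLoc_subring : poly_subring inLoc.
Proof. by split; [exact: inLoc_add | exact: inLoc_mul | exact: inLoc_inFrac]. Qed.

Lemma is_ideal_inPol_contraction (I : F -> Prop) :
  is_ideal inLoc I -> is_ideal inPol (fun x => I x /\ inPol x).
Proof.
case=> _ [I0 [I_add I_mul]]; split; first by move=> x [].
split; first by split=> //; rewrite -inFrac0; apply: inPol_inFrac.
split=> [x y [Ix Px] [Iy Py]|r x Pr [Ix Px]]; split.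
- exact: I_add.
- exact: inPol_add.
- exact/I_mul/Ix/inLoc_inPol.
- exact: inPol_mul.
Qed.

End LocalisationAtOrigin.
Arguments inPol_subring {k m}.
Arguments inLoc_subring {k m}.

Section KoszulHomologyIso.
Variables (k : fieldType) (m : nat) (I : Frac k m -> Prop).
Hypothesis I_ideal : is_ideal (@inLoc k m) I.
Local Notation inPol := (@inPol k m).
Local Notation inLoc := (@inLoc k m).
Local Notation Ibar := (fun x => I x /\ inPol x).
Let Ibar_ideal := is_ideal_inPol_contraction I_ideal.

Lemma is_chain_inPol_inLoc n c : is_chain inPol n c -> is_chain inLoc n c.
Proof. by case=> Pc c0; split=> // T; apply: inLoc_inPol. Qed.

Lemma eq_mod_Ibar n c c' : is_chain inPol n c -> is_chain inPol n c' ->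
  eq_mod Ibar c c' <-> eq_mod I c c'.
Proof.
move=> [Pc _] [Pc' _]; split=> cc' T; first by case: (cc' T).
by split; [exact: cc' | exact: (S_sub inPol_subring (Pc T) (Pc' T))].
Qed.

Lemma homologous_inPol_inLoc n z z' :
  homologous inPol Ibar n z z' -> homologous inLoc I n z z'.
Proof.
case=> w [wc zw]; exists w; split; first exact: is_chain_inPol_inLoc.
by move=> T; case: (zw T).
Qed.

Lemma homologous_inLoc_inPol n z z' :
  is_cycle inPol Ibar n z -> is_cycle inPol Ibar n z' ->
  homologous inLoc I n z z' -> homologous inPol Ibar n z z'.
Proof.
move=> zc zc' [w [[Lw w0] zw]].
have [Q [Q0 PQw]] := inLoc_common_denominator Lw.
have dc := is_cycleB inPol_subring Ibar_ideal zc zc'.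
set D := fun T => z T - z' T in dc *.
have Qw_chain : is_chain inPol n.+1 (scale_chain (inFrac Q) w).
  by split=> // T /w0; rewrite /scale_chain => ->; rewrite mulr0.
have QD_boundary : is_boundary inPol Ibar n (scale_chain (inFrac Q) D).
  exists (scale_chain (inFrac Q) w); split=> // T.
  rewrite kdiffZ /scale_chain -mulrBr; split.
    by apply: (J_mul I_ideal); [exact: inLoc_inFrac | exact: zw].
  rewrite mulrBr -kdiffZ; apply: (S_sub inPol_subring).
    exact/inPol_mul/(proj1 (proj1 dc))/inPol_inFrac.
  exact: (S_kdiff inPol_subring Qw_chain T).
have := is_boundaryB inPol_subring Ibar_ideal QD_boundary
  (homologous_scale_poly inPol_subring Ibar_ideal Q0 dc).
by apply: is_boundary_ext => T; rewrite /scale_chain subKr.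
Qed.

Lemma inLoc_cycle_homologous_inPol n z' : is_cycle inLoc I n z' ->
  exists z, is_cycle inPol Ibar n z /\ homologous inLoc I n z z'.
Proof.
move=> [[Lz' z'0] dz'].
have [Q [Q0 PQz']] := inLoc_common_denominator Lz'.
have Qz'_chain : is_chain inPol n (scale_chain (inFrac Q) z').
  by split=> // T /z'0; rewrite /scale_chain => ->; rewrite mulr0.
exists (scale_chain (inFrac Q) z'); split.
  split=> // T; rewrite subr0; split.
    rewrite kdiffZ; apply: (J_mul I_ideal); first exact: inLoc_inFrac.
    by rewrite -[kdiff _ _]subr0.
  exact: (S_kdiff inPol_subring Qz'_chain T).
exact: (homologous_scale_poly inLoc_subring I_ideal Q0 (conj (conj Lz' z'0) dz')).
Qed.

End KoszulHomologyIso.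

Theorem mainTheorem14 (k : fieldType) (m : nat) (I : Frac k m -> Prop) :
  is_ideal (@inLoc k m) I ->
  let Ibar := fun x => I x /\ inPol x in
  (forall n c, is_chain (@inPol k m) n c -> is_chain (@inLoc k m) n c) /\
  (forall n c c', is_chain (@inPol k m) n c -> is_chain (@inPol k m) n c' ->
     (eq_mod Ibar c c' <-> eq_mod I c c')) /\
  (forall n, induces_homology_iso (@inPol k m) Ibar (@inLoc k m) I n).
Proof.
move=> I_ideal Ibar; split; first exact: is_chain_inPol_inLoc.
split; first exact: eq_mod_Ibar.
move=> n; split; last exact: inLoc_cycle_homologous_inPol.
move=> z z' zc zc'; split; first exact: homologous_inPol_inLoc.
exact: homologous_inLoc_inPol.
Qed.
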